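(* Let $G$ be an undirected graph with double cover $H$. For any nonempty simple set $S\subset V_H$, let $L=\{u:u_1\in S\}$ and $R=\{u:u_2\in S\}$. Then $\beta_G(L,R)=\Phi_H(S)$.
   Context: $G$ is unweighted; $\mathrm{vol}(S)=\sum_{v\in S}\deg(v)$; $e(A,B)$ is the number of edges between disjoint $A,B$. $\beta_G(L,R)=1-\frac{2e(L,R)}{\mathrm{vol}(L\cup R)}$. Conductance: $\Phi_H(S)=\frac{|\partial S|}{\min\{\mathrm{vol}(S),\mathrm{vol}(V_H\setminus S)\}}$. The double cover $H$ has vertices $v_1,v_2$ for each $v\in V_G$ and edges $\{u_1,v_2\},\{u_2,v_1\}$ for each $\{u,v\}\in E_G$. A set $S\subset V_H$ is simple if $|\{v_1,v_2\}\cap S|\le1$ for all $v\in V_G$. *)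

From HB Require Import structures.
From mathcomp Require Import all_boot all_order all_algebra.
Set Implicit Arguments. Unset Strict Implicit. Unset Printing Implicit Defensive.
Import Order.TTheory GRing.Theory Num.Theory.

(* An unweighted undirected graph on a finite vertex type T is a symmetric,
   irreflexive boolean relation g. *)
Section GraphDefs.
Variables (T : finType) (g : rel T).

Definition deg (v : T) : nat := #|[set w | g v w]|.

Definition vol (S : {set T}) : nat := \sum_(v in S) deg v.

(* e(A,B): number of edges between A and B (for disjoint A, B each edge
   {a,b} with a in A, b in B is counted once as the ordered pair (a,b)) *)
Definition ecount (A B : {set T}) : nat :=
  #|[set p : T * T | [&& p.1 \in A, p.2 \in B & g p.1 p.2]]|.

Definition beta (L R : {set T}) : rat :=
  1 - 2%:R * (ecount L R)%:R / (vol (L :|: R))%:R.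

Definition conductance (S : {set T}) : rat :=
  (ecount S (~: S))%:R / (minn (vol S) (vol (~: S)))%:R.

End GraphDefs.

(* Double cover: vertex (v,false) is v_1, (v,true) is v_2;
   edges {u_1,v_2}, {u_2,v_1} for each edge {u,v} of G. *)
Definition dcover (T : finType) (g : rel T) : rel (T * bool) :=
  fun x y => g x.1 y.1 && (x.2 != y.2).

Definition simple_set (T : finType) (S : {set T * bool}) : Prop :=
  forall v : T, ~~ (((v, false) \in S) && ((v, true) \in S)).

From HB Require Import structures.
From mathcomp Require Import all_boot all_order all_algebra.
From mathcomp Require Import ring.
Set Implicit Arguments. Unset Strict Implicit. Unset Printing Implicit Defensive.
Import Order.TTheory GRing.Theory Num.Theory.

(* Let L and R be the fibers of S over false and true.  A vertex of the
   double cover has the degree of its projection, so vol_H(S) = vol(L) + vol(R),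
   which is vol(L u R) since simplicity makes L and R disjoint.  Simplicity also
   gives L <= ~R and R <= ~L, whence vol_H(S) <= vol_H(~S) and the minimum in
   Phi_H(S) is vol_H(S).  Counting the edges out of S, vol_H(S) = |dS| + e_H(S,S),
   and the ordered edges of H inside S are the edges of G from L to R and from
   R to L, so e_H(S,S) = 2 e(L,R).  Hence Phi_H(S) = 1 - 2 e(L,R) / vol(L u R). *)

Section Volume.
Variables (T : finType) (g : rel T).

Lemma ecount_sum (A B : {set T}) :
  ecount g A B = \sum_(u in A) #|[set w in B | g u w]|.
Proof.
rewrite /ecount -sum1dep_card.
rewrite -(pair_big_dep (mem A) (fun u w => (w \in B) && g u w) (fun _ _ => 1)).
by apply: eq_bigr => u _; rewrite sum1dep_card.
Qed.

Lemma ecount_sym (A B : {set T}) : symmetric g -> ecount g A B = ecount g B A.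
Proof.
move=> g_sym; pose swap (p : T * T) := (p.2, p.1).
have swap_inj : injective swap by apply: (can_inj (g := swap)) => -[].
rewrite /ecount -(card_preimset _ swap_inj); apply: eq_card => -[u w].
by rewrite !inE /= g_sym andbCA.
Qed.

Lemma vol_ecount (A : {set T}) : vol g A = ecount g A (~: A) + ecount g A A.
Proof.
rewrite !ecount_sum -big_split; apply: eq_bigr => u _.
rewrite /deg -(cardsID A [set w | g u w]) addnC.
by congr (_ + _); apply: eq_card => w; rewrite !inE andbC.
Qed.

Lemma vol_sub (A B : {set T}) : A \subset B -> vol g A <= vol g B.
Proof. by move=> AB; rewrite [vol g B](big_setID A) /= (setIidPr AB) leq_addr. Qed.

Lemma vol_setU (A B : {set T}) :
  [disjoint A & B] -> vol g (A :|: B) = vol g A + vol g B.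
Proof.
by move=> AB; rewrite /vol -bigU //=; apply: eq_bigl => u; rewrite !inE.
Qed.

End Volume.

Section DoubleCover.
Variables (T : finType) (g : rel T).

Definition fiber (S : {set T * bool}) (b : bool) : {set T} := [set u | (u, b) \in S].

Lemma fiberC (S : {set T * bool}) (b : bool) : fiber (~: S) b = ~: fiber S b.
Proof. by apply/setP => u; rewrite !inE. Qed.

Lemma simple_fibers_disjoint (S : {set T * bool}) :
  simple_set S -> [disjoint fiber S false & fiber S true].
Proof.
move=> S_simple; rewrite -setI_eq0; apply/eqP/setP => u.
by rewrite !inE; apply/negbTE/S_simple.
Qed.

Lemma sum_fibers (S : {set T * bool}) (F : T * bool -> nat) :
  \sum_(x in S) F x =
    \sum_(u in fiber S false) F (u, false) + \sum_(u in fiber S true) F (u, true).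
Proof.
rewrite big_mkcond.
transitivity (\sum_b \sum_u (if (u, b) \in S then F (u, b) else 0)).
  by rewrite exchange_big pair_bigA; apply: eq_bigr => -[].
rewrite big_bool addnC /=.
by congr (_ + _); rewrite [in RHS]big_mkcond; apply: eq_bigr => u _; rewrite inE.
Qed.

Lemma card_dcover_nbhd (B : {set T * bool}) (u : T) (b : bool) :
  #|[set y in B | dcover g (u, b) y]| = #|[set w in fiber B (~~ b) | g u w]|.
Proof.
pose lift w : T * bool := (w, ~~ b).
have lift_inj : injective lift by move=> w1 w2 [].
rewrite -(card_imset _ lift_inj); apply: eq_card => -[w c].
rewrite in_set /dcover /=; apply/andP/imsetP => [[wcB /andP[guw bc]] | [w' + [-> ->]]].
  have cE : c = ~~ b by move: bc; case: (c); case: (b).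
  by exists w; rewrite ?cE // !inE -cE wcB guw.
by rewrite !inE => /andP[wB guw]; split => //; rewrite guw; case: (b).
Qed.

Lemma deg_dcover (x : T * bool) : deg (dcover g) x = deg g x.1.
Proof.
case: x => u b; rewrite /deg.
transitivity #|[set y in setT | dcover g (u, b) y]|; first by apply: eq_card => y; rewrite !inE.
by rewrite card_dcover_nbhd; apply: eq_card => w; rewrite !inE.
Qed.

Lemma vol_dcover (S : {set T * bool}) :
  vol (dcover g) S = vol g (fiber S false) + vol g (fiber S true).
Proof. by rewrite /vol sum_fibers; congr (_ + _); apply: eq_bigr => u _; rewrite deg_dcover. Qed.

Lemma ecount_dcover_self (S : {set T * bool}) :
  ecount (dcover g) S S =
    ecount g (fiber S false) (fiber S true) + ecount g (fiber S true) (fiber S false).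
Proof.
rewrite !ecount_sum sum_fibers.
by congr (_ + _); apply: eq_bigr => u _; rewrite card_dcover_nbhd.
Qed.

Lemma vol_dcover_simple_le_compl (S : {set T * bool}) :
  simple_set S -> vol (dcover g) S <= vol (dcover g) (~: S).
Proof.
move=> /simple_fibers_disjoint S_disj; rewrite !vol_dcover !fiberC addnC.
by apply: leq_add; apply: vol_sub; rewrite -disjoints_subset // disjoint_sym.
Qed.

End DoubleCover.

Theorem lemma2 (T : finType) (g : rel T)
  (g_sym : symmetric g) (g_irr : irreflexive g)
  (S : {set T * bool}) (S_ne : S != set0) (S_simple : simple_set S)
  (S_vol : (0 < vol (dcover g) S)%N) :
  let L := [set u | (u, false) \in S] in
  let R := [set u | (u, true) \in S] in
  beta g L R = conductance (dcover g) S.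
Proof.
change (beta g (fiber S false) (fiber S true) = conductance (dcover g) S).
set L := fiber S false; set R := fiber S true.
have volS : vol (dcover g) S = vol g (L :|: R).
  by rewrite vol_dcover vol_setU // simple_fibers_disjoint.
have volS_split : vol (dcover g) S = ecount (dcover g) S (~: S) + 2 * ecount g L R.
  by rewrite {1}vol_ecount ecount_dcover_self (ecount_sym _ _ g_sym) addnn mul2n.
rewrite /conductance (minn_idPl (vol_dcover_simple_le_compl g S_simple)) /beta -volS.
have vol_neq0 : ((vol (dcover g) S)%:R != 0 :> rat)%R by rewrite pnatr_eq0 -lt0n.
rewrite volS_split natrD natrM in vol_neq0 *.
by field.
Qed.
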